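(* For every $k\ge 1$, $$B_k'=\{[f,l]: f\in B_k,\ l\in G_k\}=\{[l,f]: f\in B_k,\ l\in G_k\}.$$
   Context: $B_k\cong\wr_{i=1}^kC_2\cong\mathrm{Syl}_2(S_{2^k})$ is the automorphism group of the binary rooted tree of depth $k$, and $G_k\le B_k$ is the subgroup of automorphisms acting by even permutations on the $2^k$ leaves ($G_k\cong\mathrm{Syl}_2(A_{2^k})$). $[a,b]=aba^{-1}b^{-1}$. *)

From mathcomp Require Import all_boot all_fingroup.
Set Implicit Arguments. Unset Strict Implicit. Unset Printing Implicit Defensive.

(* Leaves of the binary rooted tree of depth k: binary words of length k.
   A vertex at depth i is a word of length i; the ancestor at depth i of a
   leaf x is the prefix take i x.  An automorphism of the rooted tree is
   determined by its action on leaves, and a permutation of the leaves comes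
   from a tree automorphism iff it preserves, for every depth i, the relation
   "has the same ancestor at depth i". *)
Definition leaf (k : nat) := (k.-tuple bool)%type.

Definition Bk (k : nat) : {set {perm leaf k}} :=
  [set s : {perm leaf k} | [forall x : leaf k, forall y : leaf k,
     forall i : 'I_k.+1,
       (take i x == take i y) == (take i (s x) == take i (s y))]].

Definition Gk (k : nat) : {set {perm leaf k}} :=
  [set s in Bk k | ~~ odd_perm s].

(* The paper's commutator convention [a,b] = a b a^-1 b^-1. *)
Definition comm (gT : finGroupType) (a b : gT) : gT := (a * b * a^-1 * b^-1)%g.

(* B_(k+1) is the wreath product of B_k with C_2: each of its elements acts by
   some g0, g1 in B_k on the two subtrees of the root and then exchanges the
   subtrees or not.  Recording whether it exchanges them, together with g0 g1
   modulo B_k', is a homomorphism into an abelian group, so an element of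
   B_(k+1)' does not exchange the subtrees and has g0 g1 in B_k'.  By induction
   g0 g1 = [a, m] with a in B_k and m in G_k; then the element is [f, l] with
   f = (a, g0^-1 a) and l = (1, m) followed by the exchange.  This l is even:
   for depth >= 2 the exchange at the root is conjugate, by swapping the two top
   levels, to performing the exchange one level down in both halves, a product
   of two permutations of equal parity.  Finally [l, f] = [f, l]^-1. *)

From mathcomp Require Import all_boot all_fingroup all_solvable.
Set Implicit Arguments. Unset Strict Implicit. Unset Printing Implicit Defensive.
Local Open Scope group_scope.

Section PermOf.
Variable T : finType.

Definition perm_or1 (f : T -> T) : {perm T} :=
  if injectiveP f is ReflectT f_inj then perm f_inj else 1.

Lemma perm_or1E f : injective f -> perm_or1 f =1 f.
Proof. by rewrite /perm_or1; case: injectiveP => // f_inj _ x; rewrite permE. Qed.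

Lemma perm_or1_eq f (p : {perm T}) : f =1 p -> perm_or1 f = p.
Proof.
move=> fE; have f_inj : injective f by move=> x y; rewrite !fE => /perm_inj.
by apply/permP => x; rewrite perm_or1E // fE.
Qed.

End PermOf.

Section Leaves.
Variable k : nat.
Implicit Types (b c : bool) (x y : leaf k).

Lemma behead_leafE b x : [tuple of behead [tuple of b :: x]] = x :> leaf k.
Proof. exact: val_inj. Qed.

Lemma eq_leaf_cons b c x y :
  ([tuple of b :: x] == [tuple of c :: y] :> leaf k.+1) = (b == c) && (x == y).
Proof. by []. Qed.

Lemma perm_leaf0 (p : {perm leaf 0}) : p = 1.
Proof. by apply/permP => x; rewrite (tuple0 (p x)) [RHS]tuple0. Qed.

End Leaves.

Lemma BkP k (s : {perm leaf k}) :
  reflect (forall (x y : leaf k) i,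
             (take i x == take i y) = (take i (s x) == take i (s y)))
          (s \in Bk k).
Proof.
rewrite inE; apply: (iffP forallP) => [sB x y i | sB x].
  have [ik | ki] := leqP i k.
    by move/forallP: (sB x) => /(_ y) /forallP /(_ (Ordinal (ik : i < k.+1))) /eqP.
  rewrite !take_oversize ?size_tuple ?(ltnW ki) //.
  by rewrite !val_eqE (inj_eq perm_inj).
by apply/forallP => y; apply/forallP => i; rewrite sB.
Qed.

Lemma Bk_group_set k : group_set (Bk k).
Proof.
apply/andP; split; first by apply/BkP => x y i; rewrite !perm1.
apply/subsetP => _ /mulsgP[s t /BkP sB /BkP tB ->].
by apply/BkP => x y i; rewrite !permM sB tB.
Qed.
Canonical Bk_group k := group (Bk_group_set k).

Lemma Gk_sub_Bk k : Gk k \subset Bk k.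
Proof. by apply/subsetP => s; rewrite inE => /andP[]. Qed.

Lemma Gk1 k : 1 \in Gk k.
Proof. by rewrite inE group1 odd_perm1. Qed.

Section Wreath.
Variable k : nat.
Implicit Types (e d b : bool) (x : leaf k).

Definition wreath_fun e (g0 g1 : {perm leaf k}) (y : leaf k.+1) : leaf k.+1 :=
  [tuple of thead y (+) e :: (if thead y then g1 else g0) [tuple of behead y]].

Lemma wreath_fun_inj e g0 g1 : injective (wreath_fun e g0 g1).
Proof.
move=> y z; case/tupleP: y => b x; case/tupleP: z => c x'.
rewrite /wreath_fun !theadE !behead_leafE => /eqP; rewrite eq_leaf_cons.
by rewrite (can_eq (addbK e)) => /andP[/eqP <- /eqP/perm_inj ->].
Qed.

Definition wreath e (g0 g1 : {perm leaf k}) : {perm leaf k.+1} :=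
  perm (@wreath_fun_inj e g0 g1).

Lemma wreathE e g0 g1 b x :
  wreath e g0 g1 [tuple of b :: x] = [tuple of b (+) e :: (if b then g1 else g0) x].
Proof. by rewrite permE /wreath_fun theadE behead_leafE. Qed.

Lemma wreathM e d g0 g1 h0 h1 :
  wreath e g0 g1 * wreath d h0 h1 =
  wreath (e (+) d) (g0 * (if e then h1 else h0)) (g1 * (if e then h0 else h1)).
Proof.
apply/permP => y; case/tupleP: y => b x.
by rewrite permM !wreathE addbA; case: b; case: e; rewrite /= permM.
Qed.

Lemma wreath1 : wreath false 1 1 = 1.
Proof.
by apply/permP => y; case/tupleP: y => b x; rewrite wreathE if_same !perm1 addbF.
Qed.

Lemma wreathV e g0 g1 : (wreath e g0 g1)^-1 =
  wreath e (if e then g1^-1 else g0^-1) (if e then g0^-1 else g1^-1).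
Proof.
by apply/eqP; rewrite eq_invg_mul wreathM addbb; case: e; rewrite /= !mulgV wreath1.
Qed.

Lemma wreathB e g0 g1 :
  (wreath e g0 g1 \in Bk k.+1) = (g0 \in Bk k) && (g1 \in Bk k).
Proof.
apply/idP/andP => [/BkP wB | [/BkP g0B /BkP g1B]].
  have gB b : (if b then g1 else g0) \in Bk k.
    apply/BkP => x y i; have := wB [tuple of b :: x] [tuple of b :: y] i.+1.
    by rewrite !wreathE /= !eqseq_cons !eqxx.
  by split; [apply: (gB false) | apply: (gB true)].
apply/BkP; case/tupleP=> b x; case/tupleP=> c y [|i]; first by rewrite !take0.
rewrite !wreathE /= !eqseq_cons (can_eq (addbK e)).
have [<- | //] := eqVneq b c; by case: b; [apply: g1B | apply: g0B].
Qed.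

End Wreath.

Section Decomposition.
Variable k : nat.
Implicit Types (b : bool) (x : leaf k) (g : {perm leaf k.+1}).

Definition root_flip g := thead (g [tuple of false :: nseq_tuple k false]).

Definition subtree_perm g b : {perm leaf k} :=
  perm_or1 (fun x : leaf k => [tuple of behead (g [tuple of b :: x])]).

Lemma root_flip_wreath e (g0 g1 : {perm leaf k}) : root_flip (wreath e g0 g1) = e.
Proof. by rewrite /root_flip wreathE. Qed.

Lemma root_flip1 : root_flip 1 = false.
Proof. by rewrite -wreath1 root_flip_wreath. Qed.

Lemma subtree_perm_wreath e (g0 g1 : {perm leaf k}) b :
  subtree_perm (wreath e g0 g1) b = if b then g1 else g0.
Proof. by apply: perm_or1_eq => x; rewrite wreathE behead_leafE. Qed.

Lemma thead_Bk g b x : g \in Bk k.+1 ->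
  thead (g [tuple of b :: x]) = b (+) root_flip g.
Proof.
move=> /BkP/(_ [tuple of b :: x] [tuple of false :: nseq_tuple k false] 1%N).
rewrite /root_flip; case/tupleP: (g _) => c y; case/tupleP: (g _) => d z /=.
by rewrite !take0 !eqseq_cons !andbT; case: b; case: c; case: d.
Qed.

Lemma subtree_fun_inj g b : g \in Bk k.+1 ->
  injective (fun x => [tuple of behead (g [tuple of b :: x])] : leaf k).
Proof.
move=> gB x y /(congr1 val) /= eq_xy.
have gx := tuple_eta (g [tuple of b :: x]); have gy := tuple_eta (g [tuple of b :: y]).
rewrite !thead_Bk // in gx gy.
have /perm_inj/eqP : g [tuple of b :: x] = g [tuple of b :: y].
  by rewrite gx gy; apply: val_inj; rewrite /= eq_xy.
by rewrite eq_leaf_cons => /andP[_ /eqP].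
Qed.

Lemma wreath_eta g : g \in Bk k.+1 ->
  g = wreath (root_flip g) (subtree_perm g false) (subtree_perm g true).
Proof.
move=> gB; apply/permP; case/tupleP => b x; rewrite wreathE [LHS]tuple_eta thead_Bk //.
by case: b; rewrite perm_or1E //; apply: subtree_fun_inj.
Qed.

Lemma subtree_perm_Bk g b : g \in Bk k.+1 -> subtree_perm g b \in Bk k.
Proof.
by move=> gB; move: (gB); rewrite {1}(wreath_eta gB) wreathB; case: b => /andP[].
Qed.

Lemma Bk_wreathP g : g \in Bk k.+1 ->
  exists e (g0 g1 : {perm leaf k}), [/\ g0 \in Bk k, g1 \in Bk k & g = wreath e g0 g1].
Proof.
move=> gB; exists (root_flip g), (subtree_perm g false), (subtree_perm g true).
by split; [apply: subtree_perm_Bk | apply: subtree_perm_Bk | apply: wreath_eta].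
Qed.

End Decomposition.

Section OddPermMorph.
Variables (T U : finType) (f : {perm T} -> {perm U}).
Hypothesis fM : {morph f : s t / s * t}.
Hypothesis odd_f_tperm : forall x y : T, x != y -> odd_perm (f (tperm x y)).

Lemma odd_perm_morph s : odd_perm (f s) = odd_perm s.
Proof.
have f1 : f 1 = 1 by apply: (mulgI (f 1)); rewrite -fM !mulg1.
case: (prod_tpermP s) => ts -> /allP dts; elim: ts dts => [|t ts IHts] dts.
  by rewrite big_nil f1 !odd_perm1.
have dt : t.1 != t.2 := dts t (mem_head t ts).
rewrite big_cons fM !odd_permM odd_f_tperm // odd_tperm dt IHts //.
by move=> u uts; apply: dts; rewrite inE uts orbT.
Qed.

End OddPermMorph.

Section WreathParity.
Variable k : nat.
Implicit Types (b : bool) (x y : leaf k) (g h : {perm leaf k}).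

Definition graft b g : {perm leaf k.+1} :=
  wreath false (if b then 1 else g) (if b then g else 1).

Lemma graftM b : {morph graft b : g h / g * h}.
Proof. by move=> g h; rewrite /graft wreathM; case: b; rewrite /= mulg1. Qed.

Lemma graft_tperm b x y :
  graft b (tperm x y) = tperm [tuple of b :: x] [tuple of b :: y].
Proof.
apply/permP; case/tupleP => c z; rewrite wreathE addbF [RHS]permE /= !eq_leaf_cons.
by case: b; case: c; rewrite /= ?perm1 // permE /=; case: ifP => //; case: ifP.
Qed.

Lemma odd_graft b g : odd_perm (graft b g) = odd_perm g.
Proof.
apply: odd_perm_morph => [|x y xy]; first exact: graftM.
by rewrite graft_tperm odd_tperm eq_leaf_cons eqxx.
Qed.

Lemma odd_wreath_false (g0 g1 : {perm leaf k}) :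
  odd_perm (wreath false g0 g1) = odd_perm g0 (+) odd_perm g1.
Proof.
have -> : wreath false g0 g1 = graft false g0 * graft true g1.
  by rewrite wreathM /= mulg1 mul1g.
by rewrite odd_permM !odd_graft.
Qed.

Definition swap_top_fun (z : leaf k.+2) : leaf k.+2 :=
  let z' : leaf k.+1 := [tuple of behead z] in
  [tuple of thead z' :: [tuple of thead z :: behead z']].

Lemma swap_top_funE b c y :
  swap_top_fun [tuple of b :: [tuple of c :: y]] = [tuple of c :: [tuple of b :: y]].
Proof. exact: val_inj. Qed.

Lemma swap_top_fun_inv : involutive swap_top_fun.
Proof. by case/tupleP => b; case/tupleP => c y; rewrite !swap_top_funE. Qed.

Definition swap_top : {perm leaf k.+2} := perm (inv_inj swap_top_fun_inv).

Lemma swap_topE b c y :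
  swap_top [tuple of b :: [tuple of c :: y]] = [tuple of c :: [tuple of b :: y]].
Proof. by rewrite permE swap_top_funE. Qed.

End WreathParity.

Lemma odd_wreath_flip k : ~~ odd_perm (wreath true 1 1 : {perm leaf k.+2}).
Proof.
set s := wreath true 1 1 : {perm leaf k.+1}.
have flip_swap : wreath true 1 1 * swap_top k = swap_top k * wreath false s s.
  apply/permP; case/tupleP => b; case/tupleP => c y.
  by rewrite !permM !(wreathE, swap_topE, if_same, perm1, addbF).
have := congr1 (@odd_perm _) flip_swap; rewrite !odd_permM odd_wreath_false addbb addbF.
by case: (odd_perm (swap_top k)); case: (odd_perm (wreath true 1 1)).
Qed.

Lemma odd_wreath k e (g0 g1 : {perm leaf k.+1}) :
  odd_perm (wreath e g0 g1 : {perm leaf k.+2}) = odd_perm g0 (+) odd_perm g1.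
Proof.
have -> : wreath e g0 g1 = wreath false g0 g1 * wreath e 1 1 by rewrite wreathM !mulg1.
rewrite odd_permM odd_wreath_false; case: e; last by rewrite wreath1 odd_perm1 addbF.
by rewrite (negbTE (odd_wreath_flip k)) addbF.
Qed.

Section Abelianization.
Variable k : nat.
Implicit Types (a b : {perm leaf k}) (g h : {perm leaf k.+1}).
Local Notation D := [~: Bk k, Bk k].

Lemma coset_der1M a b : a \in Bk k -> b \in Bk k ->
  coset D (a * b) = coset D a * coset D b.
Proof. by move=> aB bB; rewrite morphM // (subsetP (commg_norml _ _)). Qed.

Lemma coset_der1_commute a b : a \in Bk k -> b \in Bk k ->
  commute (coset D a) (coset D b).
Proof.
move=> aB bB; have: abelian (Bk k / D) by apply: sub_der1_abelian.
by move/centsP; apply; apply: mem_quotient.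
Qed.

Definition subtree_class g := coset D (subtree_perm g false * subtree_perm g true).

Lemma root_flipM g h : g \in Bk k.+1 -> h \in Bk k.+1 ->
  root_flip (g * h) = root_flip g (+) root_flip h.
Proof.
by case/Bk_wreathP=> e [g0 [g1 [_ _ ->]]] /Bk_wreathP[d [h0 [h1 [_ _ ->]]]];
  rewrite wreathM !root_flip_wreath.
Qed.

Lemma subtree_classM g h : g \in Bk k.+1 -> h \in Bk k.+1 ->
  subtree_class (g * h) = subtree_class g * subtree_class h.
Proof.
case/Bk_wreathP=> e [g0 [g1 [g0B g1B ->]]] /Bk_wreathP[d [h0 [h1 [h0B h1B ->]]]].
rewrite /subtree_class wreathM !subtree_perm_wreath.
case: e => /=; rewrite !coset_der1M ?groupM // -!mulgA; congr (_ * _).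
  by rewrite mulgA (coset_der1_commute h1B g1B) -mulgA (coset_der1_commute h1B h0B).
by rewrite !mulgA (coset_der1_commute h0B g1B).
Qed.

Lemma subtree_class1 : subtree_class 1 = 1.
Proof. by rewrite /subtree_class -wreath1 !subtree_perm_wreath mulg1 coset_id. Qed.

Lemma subtree_classV g : g \in Bk k.+1 -> subtree_class g^-1 = (subtree_class g)^-1.
Proof.
move=> gB; apply: (mulIg (subtree_class g)).
by rewrite -subtree_classM ?groupV // !mulVg subtree_class1.
Qed.

Lemma subtree_class_commute g h : g \in Bk k.+1 -> h \in Bk k.+1 ->
  commute (subtree_class g) (subtree_class h).
Proof. by move=> gB hB; apply: coset_der1_commute; rewrite groupM ?subtree_perm_Bk. Qed.

Lemma root_flipV g : g \in Bk k.+1 -> root_flip g^-1 = root_flip g.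
Proof.
by case/Bk_wreathP=> e [g0 [g1 [_ _ ->]]]; rewrite wreathV !root_flip_wreath.
Qed.

Definition wreath_abel_ker :=
  [set g in Bk k.+1 | ~~ root_flip g & subtree_class g == 1].

Lemma wreath_abel_ker_group_set : group_set wreath_abel_ker.
Proof.
apply/andP; split; first by rewrite inE group1 root_flip1 subtree_class1 eqxx.
apply/subsetP => _ /mulsgP[g h gK hK ->].
move: gK hK => /setIdP[gB /andP[/negbTE eg /eqP cg]] /setIdP[hB /andP[/negbTE eh /eqP ch]].
by rewrite inE groupM // root_flipM // subtree_classM // cg ch mulg1 eg eh eqxx.
Qed.
Canonical wreath_abel_ker_group := group wreath_abel_ker_group_set.

Lemma der1_sub_wreath_abel_ker : [~: Bk k.+1, Bk k.+1] \subset wreath_abel_ker.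
Proof.
rewrite gen_subG; apply/subsetP => _ /imset2P[g h gB hB ->].
have gVB : g^-1 \in Bk k.+1 by rewrite groupV.
have hVB : h^-1 \in Bk k.+1 by rewrite groupV.
rewrite commgEl conjgE inE !groupM //= !root_flipM ?groupM // !root_flipV //.
rewrite !subtree_classM ?groupM // !subtree_classV // addbCA addKb addbb /=.
by rewrite (subtree_class_commute gB hB) !mulKg mulVg.
Qed.

Lemma der1_BkS_wreathP g : g \in [~: Bk k.+1, Bk k.+1] ->
  exists g0 g1 : {perm leaf k},
    [/\ g0 \in Bk k, g0 * g1 \in D & g = wreath false g0 g1].
Proof.
move/(subsetP der1_sub_wreath_abel_ker); rewrite inE => /and3P[gB flip_g /eqP cg].
exists (subtree_perm g false), (subtree_perm g true); split.
- exact: subtree_perm_Bk.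
- apply: coset_idr cg.
  by rewrite (subsetP (commg_norml _ _)) // groupM ?subtree_perm_Bk.
- by rewrite {1}(wreath_eta gB) (negbTE flip_g).
Qed.

End Abelianization.

Lemma commE (gT : finGroupType) (a b : gT) : comm a b = [~ a^-1, b^-1].
Proof. by rewrite commgEl conjgE !invgK /comm !mulgA. Qed.

Lemma commV (gT : finGroupType) (a b : gT) : comm b a = (comm a b)^-1.
Proof. by rewrite /comm !invMg !invgK !mulgA. Qed.

Lemma comm_wreath k (a b m : {perm leaf k}) :
  comm (wreath false a b) (wreath true 1 m) =
  wreath false (a * b^-1) (b * a^-1 * comm a m).
Proof. by rewrite /comm !wreathV !wreathM /= invg1 !mulg1 !mulgA mulgKV. Qed.

Lemma comm_Bk_Gk1 k : 1 \in [set comm f l | f in Bk k, l in Gk k].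
Proof. by apply/imset2P; exists 1 1; rewrite ?group1 ?Gk1 // /comm invg1 !mulg1. Qed.

Lemma der1_Bk_sub_comm k :
  [~: Bk k, Bk k] \subset [set comm f l | f in Bk k, l in Gk k].
Proof.
apply/subsetP; case: k => [|k] g; first by rewrite (perm_leaf0 g) comm_Bk_Gk1.
elim: k g => [|k IHk] g /der1_BkS_wreathP[g0 [g1 [g0B g01D ->]]].
  by rewrite (perm_leaf0 g0) (perm_leaf0 g1) wreath1 comm_Bk_Gk1.
have /imset2P[a m aB /setIdP[mB even_m] g01E] := IHk _ g01D.
apply/imset2P; exists (wreath false a (g0^-1 * a)) (wreath true 1 m).
- by rewrite wreathB aB groupM ?groupV.
- by rewrite inE wreathB group1 mB odd_wreath odd_perm1.
- by rewrite comm_wreath invMg invgK mulgA mulgV mul1g mulgK -g01E mulKg.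
Qed.

Theorem theorem3 (k : nat) (hk : 0 < k) :
  [set comm f l | f in Bk k, l in Gk k] = [~: Bk k, Bk k]%g /\
  [set comm l f | f in Bk k, l in Gk k] = [~: Bk k, Bk k]%g.
Proof.
have comm_der1 f l : f \in Bk k -> l \in Gk k -> comm f l \in [~: Bk k, Bk k].
  by move=> fB /(subsetP (Gk_sub_Bk k)) lB; rewrite commE mem_commg ?groupV.
have der1_sub := der1_Bk_sub_comm k.
split; apply/eqP; rewrite eqEsubset; apply/andP; split.
- by apply/subsetP => _ /imset2P[f l fB lG ->]; apply: comm_der1.
- exact: der1_sub.
- by apply/subsetP => _ /imset2P[f l fB lG ->]; rewrite commV groupV comm_der1.
- apply/subsetP => g; rewrite -groupV => /(subsetP der1_sub)/imset2P[f l fB lG gVE].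
  by apply/imset2P; exists f l; rewrite // commV -gVE invgK.
Qed.
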